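(* There is an absolute constant $c>0$ such that the following holds. Let $2\le k\le d$ be integers, let $g:\{\pm1\}^k\to\{\pm1\}$ be monotone, let $f:\{\pm1\}^d\to\{\pm1\}$ be $f(x)=g(x_1,\dots,x_k)$, and let $\mathcal D$ be the distribution of $(\mathbf x,f(\mathbf x))$ with $\mathbf x$ uniform on $\{\pm1\}^d$. Then the class $\mathcal H=\{\mathrm{proj}_i:i\in[d]\}$, $\mathrm{proj}_i(x)=x_i$, satisfies the $\gamma$-weak learning assumption with respect to $\mathcal D$ with $\gamma=c\log k/k$.
   Context: A function is monotone if $g(x)\le g(y)$ whenever $x_i\le y_i$ for all $i$. A distribution $\mathcal D'$ is induced by conditioning $\mathcal D$ on $\mathcal H$ if it equals $\mathcal D$ conditioned on an event $h_1(\mathbf x)=b_1,\dots,h_m(\mathbf x)=b_m$ of positive probability with $h_j\in\mathcal H$, $b_j\in\{\pm1\}$, $m\ge0$. $\mathcal H$ satisfies the $\gamma$-weak learning assumption w.r.t. $\mathcal D$ if for every induced $\mathcal D'$ there is $h\in\mathcal H$ with $|\mathrm{Cov}_{\mathcal D'}[h(\mathbf x),\mathbf y]|\ge\gamma\,\mathrm{Var}_{\mathcal D'}[\mathbf y]$. *)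

From HB Require Import structures.
From mathcomp Require Import all_boot all_order all_algebra.
From mathcomp Require Import Rstruct.
From Stdlib Require Rdefinitions Rpower.
Set Implicit Arguments. Unset Strict Implicit. Unset Printing Implicit Defensive.
Import Order.TTheory GRing.Theory Num.Theory.
Local Open Scope ring_scope.
Notation R := Rdefinitions.R.

(* Points of {±1}^n, encoded as boolean vectors: true = +1, false = -1. *)
Definition cube (n : nat) := {ffun 'I_n -> bool}.

Definition pm (b : bool) : R := if b then 1 else -1.

Definition monotone_pm (k : nat) (g : cube k -> bool) : Prop :=
  forall x y : cube k, (forall i, pm (x i) <= pm (y i)) -> pm (g x) <= pm (g y).

Definition junta (k d : nat) (hkd : (k <= d)%N) (g : cube k -> bool) (x : cube d) : bool :=
  g [ffun i : 'I_k => x (widen_ord hkd i)].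

Definition proj (d : nat) (i : 'I_d) (x : cube d) : R := pm (x i).

Definition induced_event (d : nat) (I : Type) (h : I -> cube d -> R)
  (s : seq (I * bool)) : {set cube d} :=
  [set x | all (fun p => h p.1 x == pm p.2) s].

(* Expectation under D conditioned on E (x uniform on {±1}^d, hence uniform on E) *)
Definition cexp (d : nat) (E : {set cube d}) (F : cube d -> R) : R :=
  (\sum_(x in E) F x) / #|E|%:R.

Definition ccov (d : nat) (E : {set cube d}) (F G : cube d -> R) : R :=
  cexp E (fun x => F x * G x) - cexp E F * cexp E G.

Definition cvar (d : nat) (E : {set cube d}) (F : cube d -> R) : R :=
  cexp E (fun x => F x ^+ 2) - cexp E F ^+ 2.

(* gamma-weak learning assumption for the class {h i | i : I} w.r.t. the distribution
   of (x, y(x)), x uniform on {±1}^d: for every induced (positive-probability,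
   i.e. nonempty) conditioning event there is a hypothesis with
   |Cov[h(x), y]| >= gamma * Var[y]. *)
Definition weak_learning (d : nat) (I : Type) (h : I -> cube d -> R)
  (y : cube d -> R) (gamma : R) : Prop :=
  forall s : seq (I * bool), induced_event h s != set0 ->
    exists i : I, gamma * cvar (induced_event h s) y
                  <= `|ccov (induced_event h s) (h i) y|.

From HB Require Import structures.
From mathcomp Require Import all_boot all_order all_algebra.
From mathcomp Require Import Rstruct.
From mathcomp Require Import ring lra.
From Stdlib Require Rpower Rtrigo_def Exp_prop.
Set Implicit Arguments. Unset Strict Implicit. Unset Printing Implicit Defensive.
Import Order.TTheory GRing.Theory Num.Theory.
Local Open Scope ring_scope.

(* Conditioning the uniform distribution on values of some coordinates leaves the uniform
   distribution on a subcube, on which [f] is still a monotone function of its free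
   coordinates among the first [k].  For a monotone ±1 function, Cov[x_j, f] is the
   influence of coordinate [j].  A KKL-type inequality, proved with Fourier analysis on the
   subcube and the Bonami lemma, gives Var f <= (ε + 1/(t+2)) Σ_j Inf_j f as soon as every
   influence is at most δ with 9^t δ <= ε^2.  Only [k] coordinates have nonzero influence,
   so taking δ = c (log k / k) Var f, t = ⌊log_81 k⌋ and ε = 1/(4 c log k) yields
   Var f <= Var f / 2: some influence exceeds δ unless Var f = 0. *)

Local Notation ln := Rpower.ln.
Local Notation exp := Rtrigo_def.exp.

Definition flip (d : nat) (j : 'I_d) (x : cube d) : cube d :=
  [ffun i => if i == j then ~~ x i else x i].

Lemma flipE d (j : 'I_d) x i : flip j x i = if i == j then ~~ x i else x i.
Proof. by rewrite ffunE. Qed.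

Lemma flipK d (j : 'I_d) : involutive (flip j).
Proof. by move=> x; apply/ffunP => i; rewrite !flipE; case: eqP => // ->; rewrite negbK. Qed.

Lemma flip_inj d (j : 'I_d) : injective (flip j).
Proof. exact: inv_inj (flipK j). Qed.

Lemma cube_neq d (x y : cube d) : x != y -> exists j, x j != y j.
Proof.
move=> nxy; apply/existsP; apply: contraR nxy => /existsPn xy.
by apply/eqP/ffunP => i; apply/eqP/negPn/xy.
Qed.

Lemma pmN b : pm (~~ b) = - pm b.
Proof. by case: b; rewrite /pm ?opprK. Qed.

Lemma pmK b : pm b * pm b = 1.
Proof. by case: b; rewrite /pm ?mulrNN mulr1. Qed.

Lemma pm_inj : injective pm.
Proof. by move=> [] [] //; rewrite /pm => h; lra. Qed.

Section ConditionalExpectation.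
Variables (d : nat) (E : {set cube d}).

Lemma eq_cexp f g : {in E, f =1 g} -> cexp E f = cexp E g.
Proof. by move=> fg; rewrite /cexp (eq_bigr _ fg). Qed.

Lemma cexpD f g : cexp E (fun x => f x + g x) = cexp E f + cexp E g.
Proof. by rewrite /cexp big_split mulrDl. Qed.

Lemma cexpZ c f : cexp E (fun x => c * f x) = c * cexp E f.
Proof. by rewrite /cexp -mulr_sumr mulrA. Qed.

Lemma cexpN f : cexp E (fun x => - f x) = - cexp E f.
Proof. by rewrite /cexp sumrN mulNr. Qed.

Lemma cexpB f g : cexp E (fun x => f x - g x) = cexp E f - cexp E g.
Proof. by rewrite cexpD cexpN. Qed.

Lemma cexp_sum (I : finType) (P : pred I) (F : I -> cube d -> R) :
  cexp E (fun x => \sum_(i | P i) F i x) = \sum_(i | P i) cexp E (F i).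
Proof. by rewrite /cexp exchange_big mulr_suml. Qed.

Lemma cexp_ge0 f : {in E, forall x, 0 <= f x} -> 0 <= cexp E f.
Proof. by move=> f0; rewrite divr_ge0 ?ler0n ?sumr_ge0. Qed.

Lemma ler_cexp f g : {in E, forall x, f x <= g x} -> cexp E f <= cexp E g.
Proof. by move=> fg; rewrite -subr_ge0 -cexpB cexp_ge0 // => x /fg; rewrite subr_ge0. Qed.

Hypothesis E_neq0 : E != set0.

Lemma natr_card_neq0 : #|E|%:R != 0 :> R.
Proof. by rewrite pnatr_eq0 cards_eq0. Qed.

Lemma cexp_cst c : cexp E (fun=> c) = c.
Proof. by rewrite /cexp sumr_const -[c *+ _]mulr_natr mulfK ?natr_card_neq0. Qed.

Lemma cexp_CauchySchwarz f g :
  cexp E (fun x => f x * g x) ^+ 2 <= cexp E (fun x => f x ^+ 2) * cexp E (fun x => g x ^+ 2).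
Proof.
rewrite /cexp expr_div_n mulf_div ler_pM2r; last first.
  by rewrite invr_gt0 exprn_gt0 // lt0r ler0n natr_card_neq0.
have sum_mul (F G : cube d -> R) : (\sum_(x in E) F x) * (\sum_(y in E) G y) =
    \sum_(x in E) \sum_(y in E) F x * G y.
  by rewrite mulr_suml; apply: eq_bigr => x _; rewrite mulr_sumr.
have lagrange : \sum_(x in E) \sum_(y in E) (f x * g y - f y * g x) ^+ 2 =
    2 * ((\sum_(x in E) f x ^+ 2) * (\sum_(y in E) g y ^+ 2)
         - (\sum_(x in E) f x * g x) ^+ 2).
  transitivity (\sum_(x in E) \sum_(y in E) f x ^+ 2 * g y ^+ 2
      + \sum_(x in E) \sum_(y in E) f y ^+ 2 * g x ^+ 2
      - 2 * \sum_(x in E) \sum_(y in E) (f x * g x) * (f y * g y)).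
    rewrite mulr_sumr -big_split -sumrB; apply: eq_bigr => x _ /=.
    by rewrite mulr_sumr -big_split -sumrB; apply: eq_bigr => y _ /=; ring.
  by rewrite [in RHS]expr2 !sum_mul [X in _ + X - _]exchange_big; ring.
rewrite -subr_ge0 -(pmulr_rge0 _ (ltr0n _ 2)) -lagrange.
by apply: sumr_ge0 => x _; apply: sumr_ge0 => y _; apply: sqr_ge0.
Qed.
End ConditionalExpectation.

(* A frequency [S : cube d] stands for the set of coordinates [j] with [S j]. *)
Definition chi d (S x : cube d) : R := \prod_j (if S j then pm (x j) else 1).

Definition freq0 d : cube d := [ffun => false].

Definition deg d (S : cube d) : nat := (\sum_j S j)%N.

Definition bderiv d (j : 'I_d) (f : cube d -> R) (x : cube d) : R :=
  pm (x j) * (f x - f (flip j x)) / 2.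

Section Characters.
Variable d : nat.
Implicit Types (S x : cube d) (j : 'I_d).

Lemma chi_flip j S x : chi S (flip j x) = if S j then - chi S x else chi S x.
Proof.
rewrite /chi (bigD1 j) // [in RHS](bigD1 j) //= flipE eqxx.
under eq_bigr => i ij do rewrite flipE (negbTE ij).
by case: (S j); rewrite ?pmN ?mulNr.
Qed.

Lemma chi_flip_freq j S x : chi (flip j S) x = pm (x j) * chi S x.
Proof.
rewrite /chi (bigD1 j) // [in RHS](bigD1 j) //= flipE eqxx.
under eq_bigr => i ij do rewrite flipE (negbTE ij).
by case: (S j); rewrite /= ?mulr1 ?mul1r // mulrA pmK mul1r.
Qed.

Lemma chiK S x : chi S x * chi S x = 1.
Proof. by rewrite /chi -big_split big1 // => i _ /=; case: (S i); rewrite ?pmK ?mulr1. Qed.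

Lemma chi0 x : chi (freq0 d) x = 1.
Proof. by rewrite /chi big1 // => i _; rewrite ffunE. Qed.

Lemma deg_eq0 S : (deg S == 0)%N = (S == freq0 d).
Proof.
rewrite /deg sum_nat_eq0; apply/forallP/eqP => [S0|->]; last by move=> i; rewrite ffunE.
by apply/ffunP => i; rewrite ffunE; move: (S0 i); case: (S i).
Qed.

Lemma deg_flip j S : ~~ S j -> deg (flip j S) = (deg S).+1.
Proof.
move=> Sj; rewrite /deg (bigD1 j) // [in RHS](bigD1 j) //= flipE eqxx (negbTE Sj).
by congr (_ + _)%N; apply: eq_bigr => i /negbTE ij; rewrite flipE ij.
Qed.

Lemma bderiv_flip j f x : bderiv j f (flip j x) = bderiv j f x.
Proof. by rewrite /bderiv flipK flipE eqxx pmN; ring. Qed.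

End Characters.

Lemma pm_add_sqr b (q r : R) :
  (q + pm b * r) ^+ 2 = q ^+ 2 + r ^+ 2 + pm b * (2 * (q * r)).
Proof. by case: b; rewrite /pm; ring. Qed.

Lemma pm_add_pow4 b (q r : R) : (q + pm b * r) ^+ 4 =
  q ^+ 4 + 6 * (q ^+ 2 * r ^+ 2) + r ^+ 4 + pm b * (4 * (q ^+ 3 * r) + 4 * (q * r ^+ 3)).
Proof. by case: b; rewrite /pm; ring. Qed.

Lemma bonami_step_arith (F : realFieldType) (A B X Q P a : F) :
  0 <= A -> 0 <= B -> 0 <= X -> 0 <= Q -> 0 <= P -> 0 <= a ->
  A <= 9 * a * Q ^+ 2 -> B <= a * P ^+ 2 -> X ^+ 2 <= A * B ->
  A + 6 * X + B <= 9 * a * (Q + P) ^+ 2.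
Proof.
move=> A0 B0 X0 Q0 P0 a0 AQ BP XAB.
have XQP : X <= 3 * a * Q * P.
  rewrite -ler_sqr ?nnegrE ?mulr_ge0 //; apply: (le_trans XAB).
  by rewrite (_ : _ ^+ 2 = (9 * a * Q ^+ 2) * (a * P ^+ 2)); [exact: ler_pM | ring].
have aP0 : 0 <= a * P ^+ 2 by rewrite mulr_ge0 ?sqr_ge0.
rewrite (_ : 9 * a * _ ^+ 2 = 9 * a * Q ^+ 2 + 6 * (3 * a * Q * P) + 9 * (a * P ^+ 2)).
  lra.
ring.
Qed.

Lemma quartic_arith (F : realFieldType) (G I A b e : F) :
  0 <= G -> 0 <= I -> 0 <= e -> G ^+ 4 <= A * I ^+ 3 -> A <= b * G ^+ 2 ->
  b * I <= e ^+ 2 -> G <= e * I.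
Proof.
move=> G0 I0 e0 GA Ab bIe; have [->|Gn0] := eqVneq G 0; first by rewrite mulr_ge0.
have G2 : G ^+ 2 <= b * I ^+ 3.
  have G2pos : 0 < G ^+ 2 by rewrite exprn_gt0 // lt_def Gn0.
  rewrite -(ler_pM2l G2pos) -exprD (le_trans GA) // [G ^+ 2 * _]mulrA [G ^+ 2 * b]mulrC.
  by rewrite ler_wpM2r ?exprn_ge0.
rewrite -ler_sqr ?nnegrE ?mulr_ge0 //; apply: (le_trans G2).
by rewrite exprMn (exprS I 2) mulrA ler_wpM2r ?exprn_ge0.
Qed.

Lemma bderiv_pm d (j : 'I_d) f x : (forall x, f x = 1 \/ f x = -1) ->
  [\/ bderiv j f x = 0, bderiv j f x = 1 | bderiv j f x = -1].
Proof.
move=> fpm; rewrite /bderiv; case: (fpm x) => ->; case: (fpm (flip j x)) => ->;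
  case: (x j); rewrite /pm; [constructor 1|constructor 1|constructor 2|constructor 3|
    constructor 3|constructor 2|constructor 1|constructor 1]; lra.
Qed.

Lemma level_split_arith (F : realFieldType) (n t : nat) (w : F) : 0 <= w ->
  (if n != 0%N then w else 0) <=
  (if (n <= t.+1)%N then n%:R * w else 0) + t.+2%:R^-1 * (n%:R * w).
Proof.
move=> w0; have [->|n0] := eqVneq n 0%N; rewrite /=; first by rewrite !mul0r mulr0 addr0.
have nw0 : 0 <= t.+2%:R^-1 * (n%:R * w) by rewrite !mulr_ge0 ?invr_ge0 ?ler0n.
case: leqP => [_|tn].
  by rewrite -[X in X <= _]addr0 lerD // ler_peMl // ler1n lt0n.
rewrite add0r mulrA ler_peMl // ler_pdivlMl ?ltr0n // mulr1 ler_nat.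
exact: tn.
Qed.

Lemma ln_lt (x y : R) : 0 < x -> x < y -> ln x < ln y.
Proof. by move=> /RltP x0 /RltP xy; apply/RltP; apply: Rpower.ln_increasing. Qed.

Lemma ln_gt0 (x : R) : 1 < x -> 0 < ln x.
Proof.
have ln1 : ln 1 = 0 by have := Rpower.ln_1; rewrite !RealsE.
by move=> x1; rewrite -ln1; apply: ln_lt.
Qed.

Lemma ln_le_subr1 (x : R) : 0 < x -> ln x <= x - 1.
Proof.
move=> /RltP x0; have /RleP := Rpower.exp_ineq1_le (ln x).
by rewrite Rpower.exp_ln // !RealsE; lra.
Qed.

Lemma ln_natX (n e : nat) : (0 < n)%N -> ln (n ^ e)%:R = e%:R * ln n%:R.
Proof.
move=> n0; have /RltP n0' : 0 < n%:R :> R by rewrite ltr0n.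
by have := Rpower.ln_pow _ n0' e; rewrite !RealsE natrX.
Qed.

(* [ln x / 6 <= exp (ln x / 6) = x ^ (1/6)] *)
Lemma ln_pow6_le (x : R) : 1 < x -> ln x ^+ 6 <= 6 ^+ 6 * x.
Proof.
move=> x1; pose y := ln x / 6; have y0 : 0 <= y by rewrite divr_ge0 ?ltW ?ln_gt0.
have y_exp : y <= exp y by have /RleP := Rpower.exp_ineq1_le y; rewrite !RealsE; lra.
have x_exp : x = exp y ^+ 6.
  have /RltP x0 : 0 < x by lra.
  have /RltP ey0 : 0 < exp y ^+ 6 by apply: exprn_gt0; apply/RltP; apply: Exp_prop.exp_pos.
  apply: Rpower.ln_inv => //; have := Rpower.ln_pow _ (Exp_prop.exp_pos y) 6.
  by rewrite !RealsE Rpower.ln_exp => ->; rewrite /y; field.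
rewrite [X in _ <= _ * X]x_exp (_ : ln x = 6 * y); last by rewrite /y; field.
by rewrite exprMn ler_wpM2l ?exprn_ge0 // lerXn2r ?nnegrE //; apply: le_trans y_exp.
Qed.

Lemma kkl_eps_choice (k t : nat) (V : R) : (1 < k)%N -> (81 ^ t <= k)%N -> 0 <= V -> V <= 1 ->
  9 ^+ t * (1000^-1 * ln k%:R / k%:R * V) <= (4 * 1000^-1 * ln k%:R)^-1 ^+ 2.
Proof.
move=> k1 tk V0 V1; have k1' : 1 < k%:R :> R by rewrite ltr1n.
have k0 : 0 < k%:R :> R by lra.
have L6 := ln_pow6_le k1'; have L0 := ln_gt0 k1'.
set L := ln k%:R in L6 L0 *; set u := 1000^-1 * L; have u0 : 0 < u by rewrite /u; lra.
have u6 : 256 * u ^+ 6 <= k%:R.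
  rewrite /u exprMn; lra.
have sq : (16 * u ^+ 3 * 9 ^+ t) ^+ 2 = 256 * u ^+ 6 * (81 ^ t)%:R.
  have e81 : (81 ^ t)%:R = (9 ^+ t) ^+ 2 :> R.
    by rewrite natrX exprAC; congr (_ ^+ _); rewrite -natrX.
  by rewrite e81; ring.
have s_le : 16 * u ^+ 3 * 9 ^+ t <= k%:R.
  have u3 : 0 <= 16 * u ^+ 3 := mulr_ge0 (ler0n _ 16) (exprn_ge0 3 (ltW u0)).
  rewrite -ler_sqr ?nnegrE ?sq; last 2 first.
  - exact: mulr_ge0 u3 (exprn_ge0 t (ler0n _ 9)).
  - exact: ltW.
  rewrite expr2; apply: ler_pM => //; last by rewrite ler_nat.
  exact: mulr_ge0 (ler0n _ 256) (exprn_ge0 6 (ltW u0)).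
have s0 : 0 < 9 ^+ t :> R by rewrite exprn_gt0.
apply: le_trans (_ : 9 ^+ t * u / k%:R <= _).
  rewrite -[_ * u / _]mulrA ler_wpM2l ?(ltW s0) //.
  exact: ler_piMr (divr_ge0 (ltW u0) (ltW k0)) V1.
have -> : (4 * 1000^-1 * L)^-1 ^+ 2 = 9 ^+ t * u / (16 * u ^+ 3 * 9 ^+ t).
  by rewrite /u; field; rewrite ?gt_eqF.
rewrite ler_wpM2l ?(mulr_ge0 (ltW s0) (ltW u0)) // lef_pV2 ?posrE //.
by apply: mulr_gt0 => //; apply: mulr_gt0 => //; apply: exprn_gt0.
Qed.

(* ε = (4 c ln k)^-1 makes the first term V/4; c = 1/1000 <= 1/320 and ln k < 80 (t+1) make
   the second one at most V/4. *)
Lemma kkl_depth_choice (k t : nat) (V : R) : (1 < k)%N -> (k < 81 ^ t.+1)%N -> 0 <= V ->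
  ((4 * 1000^-1 * ln k%:R)^-1 + t.+2%:R^-1) * (k%:R * (1000^-1 * ln k%:R / k%:R * V))
  <= V / 2.
Proof.
move=> k1 kt V0; have k1' : 1 < k%:R :> R by rewrite ltr1n.
have L0 := ln_gt0 k1'; set L := ln k%:R in L0 *.
have L80 : L < 80 * t.+1%:R.
  have ln81_le : ln 81 <= 80 by apply: le_trans (ln_le_subr1 _) _; lra.
  apply: lt_le_trans (_ : ln (81 ^ t.+1)%:R <= _); first by apply: ln_lt; [lra | rewrite ltr_nat].
  by rewrite ln_natX // mulrC ler_wpM2r.
rewrite (_ : k%:R * _ = 1000^-1 * L * V); last by field; rewrite gt_eqF //; lra.
rewrite mulrDl (_ : (4 * 1000^-1 * L)^-1 * _ = V / 4); last by field; rewrite gt_eqF.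
rewrite (_ : V / 2 = V / 4 + V / 4) ?lerD2l; last by field.
rewrite ler_pdivrMl ?ltr0n // (_ : _ * (V / 4) = t.+2%:R / 4 * V); last by ring.
have t2 : t.+2%:R = t.+1%:R + 1 :> R by rewrite -[t.+2]addn1 natrD.
by rewrite ler_wpM2r // t2; lra.
Qed.

Section Subcube.
Variables (d : nat) (E : {set cube d}) (U : {set 'I_d}).
Hypothesis E_neq0 : E != set0.
Hypothesis flip_subcube : forall j x, j \in U -> x \in E -> flip j x \in E.
Hypothesis subcube_fixed : forall j x y, j \notin U -> x \in E -> y \in E -> x j = y j.
Implicit Types (S T x y : cube d) (j : 'I_d) (f : cube d -> R).

Lemma cexp_flip j f : j \in U -> cexp E (fun x => f (flip j x)) = cexp E f.
Proof.
move=> jU; rewrite /cexp [in RHS](reindex_inj (@flip_inj d j)) /=; congr (_ / _).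
apply: eq_bigl => x; apply/idP/idP; first exact: flip_subcube.
by rewrite -{2}(flipK j x); apply: flip_subcube.
Qed.

Lemma cexp_flip_odd j f :
  j \in U -> {in E, forall x, f (flip j x) = - f x} -> cexp E f = 0.
Proof.
move=> jU fodd; suff : cexp E f = - cexp E f by lra.
by rewrite -{1}(cexp_flip f jU) -cexpN; apply: eq_cexp.
Qed.

Lemma cexp_pm_odd j f : j \in U -> (forall x, f (flip j x) = f x) ->
  cexp E (fun x => pm (x j) * f x) = 0.
Proof.
by move=> jU feven; apply: (cexp_flip_odd jU) => x _; rewrite feven flipE eqxx pmN mulNr.
Qed.

Definition freqU S := [forall j, S j ==> (j \in U)].

Definition fourier f S := cexp E (fun x => f x * chi S x).

Lemma freqU_mem S j : freqU S -> S j -> j \in U.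
Proof. by move=> /forallP /(_ j) /implyP. Qed.

Lemma freqU0 : freqU (freq0 d).
Proof. by apply/forallP => i; rewrite ffunE. Qed.

Lemma freqU_flip j S : j \in U -> freqU (flip j S) = freqU S.
Proof.
move=> jU; apply/forallP/forallP => SU i; move: (SU i); rewrite ?flipE;
  by case: eqP => [->|_] //; rewrite jU !implybT.
Qed.

Lemma chi_orth S T : freqU S -> freqU T ->
  cexp E (fun x => chi S x * chi T x) = (S == T)%:R.
Proof.
move=> SU TU; have [<-|/cube_neq [j STj]] := eqVneq S T.
  by rewrite (eq_cexp (g := fun=> 1)) ?cexp_cst // => x _; rewrite chiK.
have jU : j \in U.
  by case Sj: (S j) STj; [move=> _; exact: freqU_mem SU Sj | rewrite negbK; exact: freqU_mem TU].
apply: (cexp_flip_odd jU) => x _; rewrite !chi_flip.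
by case: (S j) (T j) STj => -[] //= _; rewrite ?mulNr ?mulrN.
Qed.

Lemma sum_chi_mul_prod x y : \sum_(S | freqU S) chi S x * chi S y =
  \prod_j (1 + (j \in U)%:R * (pm (x j) * pm (y j))).
Proof.
have bool_sum j : 1 + (j \in U)%:R * (pm (x j) * pm (y j)) =
    \sum_(b : bool) (if b then (j \in U)%:R * (pm (x j) * pm (y j)) else 1).
  by rewrite big_bool addrC.
rewrite (eq_bigr _ (fun j _ => bool_sum j)).
rewrite bigA_distr_bigA /= big_mkcond /=; apply: eq_bigr => S _.
case: ifP => [SU|/negbT /forallPn [j]]; last first.
  by rewrite negb_imply => /andP [Sj jU]; rewrite (bigD1 j) //= Sj (negbTE jU) !mul0r.
rewrite /chi -big_split /=; apply: eq_bigr => i _.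
by case Si: (S i); rewrite ?mulr1 // (freqU_mem SU Si) mul1r.
Qed.

(* [nfreq] = 2^#|U| counts the frequencies supported in [U]; [nfreq_card] identifies it with
   [#|E|] without computing [#|E|]. *)
Definition nfreq : R := \prod_(j : 'I_d) (1 + (j \in U)%:R).

Lemma sum_chi_mul x y : x \in E -> y \in E ->
  \sum_(S | freqU S) chi S x * chi S y = (x == y)%:R * nfreq.
Proof.
move=> xE yE; rewrite sum_chi_mul_prod; have [<-|/cube_neq [j xyj]] := eqVneq x y.
  by rewrite mul1r; apply: eq_bigr => i _; rewrite pmK mulr1.
have jU : j \in U by apply: contraR xyj => jU; rewrite (subcube_fixed jU xE yE).
rewrite mul0r (bigD1 j) //= jU mul1r.
by case: (x j) (y j) xyj => -[] //= _; rewrite /pm; lra.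
Qed.

Lemma sum_fourier_chi f x : x \in E ->
  \sum_(S | freqU S) fourier f S * chi S x = nfreq / #|E|%:R * f x.
Proof.
move=> xE; under eq_bigr => S _ do rewrite mulrC -cexpZ.
rewrite -cexp_sum (eq_cexp (g := fun y => f y * nfreq * (y == x)%:R)); last first.
  by move=> y yE; rewrite mulrAC -mulrA -sum_chi_mul // mulr_sumr; apply: eq_bigr => S _; ring.
rewrite /cexp (bigD1 x) //= eqxx mulr1 big1 ?addr0 => [|y /andP [_ /negbTE ->]].
  by rewrite [in RHS]mulrC mulrA.
by rewrite mulr0.
Qed.

Lemma nfreq_card : nfreq / #|E|%:R = 1.
Proof.
have [x xE] := set0Pn _ E_neq0; have := sum_fourier_chi (fun=> 1) xE.
rewrite mulr1 => <-; rewrite (bigD1 (freq0 d)) ?freqU0 //= big1 => [|S /andP [SU S0]].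
  rewrite addr0 chi0 mulr1 /fourier (eq_cexp (g := fun=> 1)) ?cexp_cst // => y _.
  by rewrite chi0 mulr1.
rewrite /fourier (eq_cexp (g := fun y => chi S y * chi (freq0 d) y)); last first.
  by move=> y _; rewrite chi0 mul1r mulr1.
by rewrite chi_orth ?freqU0 // (negbTE S0) mul0r.
Qed.

Lemma fourier_expansion f x : x \in E -> f x = \sum_(S | freqU S) fourier f S * chi S x.
Proof. by move=> xE; rewrite sum_fourier_chi // nfreq_card mul1r. Qed.

Lemma parseval f g :
  cexp E (fun x => f x * g x) = \sum_(S | freqU S) fourier f S * fourier g S.
Proof.
rewrite (eq_cexp (g := fun x => \sum_(S | freqU S) fourier f S * (g x * chi S x))).
  by rewrite cexp_sum; apply: eq_bigr => S _; rewrite cexpZ.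
move=> x xE; rewrite {1}(fourier_expansion f xE) mulr_suml.
by apply: eq_bigr => S _; rewrite mulrAC mulrA.
Qed.

Lemma fourier_sum (c : cube d -> R) T : freqU T ->
  fourier (fun x => \sum_(S | freqU S) c S * chi S x) T = c T.
Proof.
move=> TU; rewrite /fourier.
under eq_cexp => x _ do rewrite mulr_suml.
under eq_cexp => x _ do under eq_bigr => S _ do rewrite -mulrA.
rewrite cexp_sum (bigD1 T) //= cexpZ chi_orth // eqxx mulr1 big1 ?addr0 // => S /andP [SU ST].
by rewrite cexpZ chi_orth // (negbTE ST) mulr0.
Qed.

Definition influence j f := cexp E (fun x => bderiv j f x ^+ 2).

Lemma cexp_bderiv_mul j f h : j \in U -> (forall x, h (flip j x) = h x) ->
  cexp E (fun x => bderiv j f x * h x) = cexp E (fun x => pm (x j) * f x * h x).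
Proof.
move=> jU heven; pose k x := pm (x j) * f (flip j x) * h x.
have kodd : cexp E k = - cexp E (fun x => pm (x j) * f x * h x).
  rewrite -(cexp_flip k jU) -cexpN; apply: eq_cexp => x _.
  by rewrite /k flipK heven flipE eqxx pmN !mulNr.
rewrite (eq_cexp (g := fun x => 2^-1 * (pm (x j) * f x * h x) - 2^-1 * k x)).
  by rewrite cexpB !cexpZ kodd; lra.
by move=> x _; rewrite /bderiv /k; ring.
Qed.

Lemma fourier_bderiv j f S : j \in U ->
  fourier (bderiv j f) S = if S j then 0 else fourier f (flip j S).
Proof.
move=> jU; rewrite /fourier; case Sj: (S j).
  by apply: (cexp_flip_odd jU) => x _; rewrite bderiv_flip chi_flip Sj mulrN.
rewrite cexp_bderiv_mul // => [|x]; last by rewrite chi_flip Sj.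
by apply: eq_cexp => x _; rewrite chi_flip_freq mulrA [pm _ * f x]mulrC.
Qed.

Lemma sum_freq_flip j (P : pred (cube d)) (F : cube d -> R) : j \in U ->
  \sum_(S | freqU S && ~~ S j && P S) F (flip j S) =
  \sum_(S | freqU S && S j && P (flip j S)) F S.
Proof.
move=> jU; rewrite [RHS](reindex_inj (@flip_inj d j)) /=.
by apply: eq_bigl => S; rewrite freqU_flip // flipE eqxx flipK.
Qed.

Lemma influence_fourier j f : j \in U ->
  influence j f = \sum_(S | freqU S && S j) fourier f S ^+ 2.
Proof.
move=> jU; rewrite /influence (eq_cexp (g := fun x => bderiv j f x * bderiv j f x)); last first.
  by move=> x _; rewrite expr2.
rewrite parseval; transitivity (\sum_(S | freqU S && ~~ S j && predT S) fourier f (flip j S) ^+ 2).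
  rewrite !big_mkcondr /=; apply: eq_bigr => S _; rewrite fourier_bderiv //.
  by case: (S j); rewrite ?mul0r // expr2.
by rewrite (sum_freq_flip predT (fun S => fourier f S ^+ 2)) //; apply: eq_bigl => S; rewrite andbT.
Qed.

(* The Bonami lemma is proved by induction on the number [m] of coordinates that the
   Fourier support may use. *)
Definition low_degree m t f := forall S, freqU S -> fourier f S != 0 ->
  (forall i : 'I_d, S i -> (i < m)%N) /\ (deg S <= t)%N.

Lemma cexp_pow4_const f : (forall S, freqU S -> fourier f S != 0 -> S = freq0 d) ->
  cexp E (fun x => f x ^+ 4) = cexp E (fun x => f x ^+ 2) ^+ 2.
Proof.
move=> f0; have fE : {in E, forall x, f x = fourier f (freq0 d)}.
  move=> x xE; rewrite (fourier_expansion f xE) (bigD1 (freq0 d)) ?freqU0 //= chi0 mulr1.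
  rewrite big1 ?addr0 // => S /andP [SU S0]; have [->|fS] := eqVneq (fourier f S) 0.
    by rewrite mul0r.
  by rewrite (f0 S SU fS) eqxx in S0.
rewrite (eq_cexp (g := fun=> fourier f (freq0 d) ^+ 4)) => [|x /fE -> //].
rewrite (eq_cexp (g := fun=> fourier f (freq0 d) ^+ 2) (f := fun x => f x ^+ 2)) => [|x /fE -> //].
by rewrite !cexp_cst // -exprM.
Qed.

Lemma low_degree_lower m t f (hm : (m < d)%N) : low_degree m.+1 t f ->
  (forall S, freqU S -> fourier f S != 0 -> ~~ S (Ordinal hm)) -> low_degree m t f.
Proof.
move=> fdeg fm S SU fS; have [Sm Sdeg] := fdeg S SU fS; split=> // i Si.
have := Sm i Si; rewrite ltnS leq_eqVlt => /orP [/eqP im|//].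
by have := fm S SU fS; rewrite (_ : Ordinal hm = i) ?Si //; apply: val_inj.
Qed.

Lemma fourier_even j f S : j \in U ->
  fourier (fun x => (f x + f (flip j x)) / 2) S = if S j then 0 else fourier f S.
Proof.
move=> jU; have flipped : cexp E (fun x => f (flip j x) * chi S x) =
    (if S j then -1 else 1) * cexp E (fun x => f x * chi S x).
  rewrite -cexpZ -(cexp_flip _ jU); apply: eq_cexp => x _ /=.
  by rewrite flipK chi_flip; case: (S j); ring.
rewrite /fourier (eq_cexp (g := fun x =>
    2^-1 * (f x * chi S x) + 2^-1 * (f (flip j x) * chi S x))) => [|x _]; last by ring.
by rewrite cexpD !cexpZ flipped; case: (S j); rewrite /fourier; lra.
Qed.

Lemma low_degree_even m t f (hm : (m < d)%N) : Ordinal hm \in U ->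
  low_degree m.+1 t f -> low_degree m t (fun x => (f x + f (flip (Ordinal hm) x)) / 2).
Proof.
move=> mU fdeg; apply: low_degree_lower => S SU; rewrite fourier_even //.
  by case: (S _); [rewrite eqxx | exact: fdeg].
by case: (S _); rewrite ?eqxx.
Qed.

Lemma low_degree_bderiv m t f (hm : (m < d)%N) : Ordinal hm \in U ->
  low_degree m.+1 t.+1 f -> low_degree m t (bderiv (Ordinal hm) f).
Proof.
move=> mU fdeg S SU; rewrite fourier_bderiv //; case Sm: (S _); rewrite ?eqxx // => fS.
have [Sm' Sdeg] := fdeg _ (etrans (freqU_flip _ mU) SU) fS.
split=> [i Si|]; last by rewrite deg_flip ?Sm in Sdeg.
have := Sm' i; rewrite flipE; case: eqP => [im|_ /(_ Si)]; first by rewrite -im Si in Sm.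
rewrite ltnS leq_eqVlt => /orP [/eqP im|//].
by rewrite (_ : Ordinal hm = i) ?Si in Sm; last by apply: val_inj.
Qed.

Lemma cexp_even_odd_sqr j q r : j \in U ->
  (forall x, q (flip j x) = q x) -> (forall x, r (flip j x) = r x) ->
  cexp E (fun x => (q x + pm (x j) * r x) ^+ 2) =
  cexp E (fun x => q x ^+ 2) + cexp E (fun x => r x ^+ 2).
Proof.
move=> jU qeven reven; under eq_cexp => x _ do rewrite pm_add_sqr.
by rewrite cexpD cexp_pm_odd ?addr0 ?cexpD // => x; rewrite qeven reven.
Qed.

Lemma cexp_even_odd_pow4 j q r : j \in U ->
  (forall x, q (flip j x) = q x) -> (forall x, r (flip j x) = r x) ->
  cexp E (fun x => (q x + pm (x j) * r x) ^+ 4) = cexp E (fun x => q x ^+ 4) +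
    6 * cexp E (fun x => q x ^+ 2 * r x ^+ 2) + cexp E (fun x => r x ^+ 4).
Proof.
move=> jU qeven reven; under eq_cexp => x _ do rewrite pm_add_pow4.
by rewrite cexpD cexp_pm_odd ?addr0 ?cexpD ?cexpZ // => x; rewrite qeven reven.
Qed.

Lemma bonami m t f : (m <= d)%N -> low_degree m t f ->
  cexp E (fun x => f x ^+ 4) <= 9 ^+ t * cexp E (fun x => f x ^+ 2) ^+ 2.
Proof.
have const_le g n : (forall S, freqU S -> fourier g S != 0 -> S = freq0 d) ->
    cexp E (fun x => g x ^+ 4) <= 9 ^+ n * cexp E (fun x => g x ^+ 2) ^+ 2.
  by move/cexp_pow4_const ->; rewrite ler_peMl ?sqr_ge0 ?exprn_ege1 //; lra.
elim: m t f => [|m IH] t f md fdeg.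
  apply: const_le => S SU fS; apply/ffunP => i; rewrite ffunE.
  by apply/negbTE/negP => /(fdeg S SU fS).1.
case: t fdeg => [|t] fdeg.
  by apply: const_le => S SU /(fdeg S SU) [_]; rewrite leqn0 deg_eq0 => /eqP.
pose j := Ordinal md; have [jU|jU] := boolP (j \in U); last first.
  apply: IH (ltnW md) _; apply: low_degree_lower fdeg _ => S SU _.
  by apply: contra jU; apply: freqU_mem.
pose q x := (f x + f (flip j x)) / 2; pose r := bderiv j f.
have f_split x : f x = q x + pm (x j) * r x.
  by rewrite /q /r /bderiv !mulrA pmK mul1r; lra.
have q_even x : q (flip j x) = q x by rewrite /q flipK addrC.
have r_even x : r (flip j x) = r x by rewrite /r bderiv_flip.
have Ef2 : cexp E (fun x => f x ^+ 2) =
    cexp E (fun x => q x ^+ 2) + cexp E (fun x => r x ^+ 2).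
  by rewrite -(cexp_even_odd_sqr jU) //; apply: eq_cexp => x _; rewrite f_split.
have Ef4 : cexp E (fun x => f x ^+ 4) = cexp E (fun x => q x ^+ 4) +
    6 * cexp E (fun x => q x ^+ 2 * r x ^+ 2) + cexp E (fun x => r x ^+ 4).
  by rewrite -(cexp_even_odd_pow4 jU) //; apply: eq_cexp => x _; rewrite f_split.
rewrite Ef4 Ef2 exprS.
have even_ge0 g n : 0 <= cexp E (fun x => g x ^+ n.*2).
  by apply: cexp_ge0 => x _; rewrite exprn_even_ge0 ?odd_double.
apply: bonami_step_arith; rewrite ?(even_ge0 _ 2) ?(even_ge0 _ 1) ?exprn_ge0 //.
- by apply: cexp_ge0 => x _; rewrite mulr_ge0 ?sqr_ge0.
- by rewrite -exprS; apply: IH (ltnW md) (low_degree_even jU fdeg).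
- exact: IH (ltnW md) (low_degree_bderiv jU fdeg).
have sqr_sqr g : cexp E (fun x => (g x ^+ 2) ^+ 2) = cexp E (fun x => g x ^+ 4).
  by apply: eq_cexp => x _; rewrite -exprM.
by rewrite -!sqr_sqr; apply: cexp_CauchySchwarz.
Qed.

Lemma cvar_fourier f :
  cvar E f = \sum_(S | freqU S && (S != freq0 d)) fourier f S ^+ 2.
Proof.
have mean : cexp E f = fourier f (freq0 d).
  by apply: eq_cexp => x _; rewrite chi0 mulr1.
rewrite /cvar (eq_cexp (g := fun x => f x * f x)) => [|x _]; last by rewrite expr2.
rewrite parseval (bigD1 (freq0 d)) ?freqU0 //= mean -expr2 addrC addrK.
by apply: eq_bigr => S _; rewrite expr2.
Qed.

Definition trunc t f x :=
  \sum_(S | freqU S) (if (deg S <= t)%N then fourier f S else 0) * chi S x.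

Lemma fourier_trunc t f S : freqU S ->
  fourier (trunc t f) S = if (deg S <= t)%N then fourier f S else 0.
Proof. exact: fourier_sum. Qed.

Lemma low_degree_trunc t f : low_degree d t (trunc t f).
Proof.
move=> S SU; rewrite fourier_trunc //; case: ifP => [St _|]; last by rewrite eqxx.
by split=> // i _; apply: ltn_ord.
Qed.

Lemma cexp_trunc_mul t f : cexp E (fun x => trunc t f x * f x) =
  \sum_(S | freqU S && (deg S <= t)%N) fourier f S ^+ 2.
Proof.
rewrite parseval big_mkcondr /=; apply: eq_bigr => S SU.
by rewrite fourier_trunc //; case: ifP; rewrite ?mul0r // expr2.
Qed.

Lemma cexp_trunc_sqr t f : cexp E (fun x => trunc t f x ^+ 2) =
  \sum_(S | freqU S && (deg S <= t)%N) fourier f S ^+ 2.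
Proof.
rewrite (eq_cexp (g := fun x => trunc t f x * trunc t f x)) => [|x _]; last by rewrite expr2.
rewrite parseval big_mkcondr /=; apply: eq_bigr => S SU.
by rewrite fourier_trunc //; case: ifP; rewrite ?mul0r // expr2.
Qed.

Lemma sum_fourier_bderiv_sqr t j f : j \in U ->
  \sum_(S | freqU S && (deg S <= t)%N) fourier (bderiv j f) S ^+ 2 =
  \sum_(S | freqU S && S j && (deg S <= t.+1)%N) fourier f S ^+ 2.
Proof.
move=> jU; transitivity
    (\sum_(S | freqU S && ~~ S j && (deg S <= t)%N) fourier f (flip j S) ^+ 2).
  rewrite !big_mkcondr /=; apply: eq_bigr => S _; rewrite fourier_bderiv //.
  by case: (S j); case: (deg S <= t)%N; rewrite ?expr0n.
rewrite (sum_freq_flip (fun S => deg S <= t)%N (fun S => fourier f S ^+ 2)) //.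
apply: eq_bigl => S; case Sj: (S j); rewrite ?andbF ?andbT //=.
suff -> : deg S = (deg (flip j S)).+1 by [].
by rewrite -{1}(flipK j S) deg_flip // flipE eqxx Sj.
Qed.

(* Two applications of Cauchy-Schwarz give Hölder's inequality with exponents 4 and 4/3. *)
Lemma cexp_holder f D : (forall x, [\/ D x = 0, D x = 1 | D x = -1]) ->
  0 <= cexp E (fun x => f x * D x) ->
  cexp E (fun x => f x * D x) ^+ 4 <=
  cexp E (fun x => f x ^+ 4) * cexp E (fun x => D x ^+ 2) ^+ 3.
Proof.
move=> Dvals fD0; pose a x := D x ^+ 2.
have aK x : a x * a x = a x by rewrite /a; case: (Dvals x) => ->; ring.
have fD_le x : f x * D x <= `|f x| * a x.
  rewrite /a; case: (Dvals x) => ->; rewrite ?expr0n ?mulr0 //= ?sqrrN expr1n !mulr1.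
    by rewrite ler_norm.
  by rewrite mulrN1 -normrN ler_norm.
pose H := cexp E (fun x => `|f x| * a x); pose K := cexp E (fun x => f x ^+ 2 * a x).
have aa : cexp E (fun x => a x ^+ 2) = cexp E a.
  by apply: eq_cexp => x _; rewrite expr2 aK.
have HK : H ^+ 2 <= K * cexp E a.
  have e1 : cexp E (fun x => `|f x| * a x * a x) = H.
    by apply: eq_cexp => x _; rewrite -mulrA aK.
  have e2 : cexp E (fun x => (`|f x| * a x) ^+ 2) = K.
    by apply: eq_cexp => x _; rewrite exprMn real_normK ?num_real // [a x ^+ 2]expr2 aK.
  by have := cexp_CauchySchwarz E_neq0 (fun x => `|f x| * a x) a; rewrite e1 e2 aa.
have KA : K ^+ 2 <= cexp E (fun x => f x ^+ 4) * cexp E a.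
  have e : cexp E (fun x => (f x ^+ 2) ^+ 2) = cexp E (fun x => f x ^+ 4).
    by apply: eq_cexp => x _; rewrite -exprM.
  by have := cexp_CauchySchwarz E_neq0 (fun x => f x ^+ 2) a; rewrite e aa.
have a0 : 0 <= cexp E a by apply: cexp_ge0 => x _; apply: sqr_ge0.
have fDH : cexp E (fun x => f x * D x) <= H by apply: ler_cexp => x _.
apply: le_trans (_ : (K * cexp E a) ^+ 2 <= _).
  rewrite (_ : 4 = 2 * 2)%N // !exprM; apply: le_trans (_ : (H ^+ 2) ^+ 2 <= _).
    by rewrite lerXn2r ?nnegrE ?exprn_ge0 ?lerXn2r ?nnegrE //; apply: le_trans fDH.
  rewrite lerXn2r ?nnegrE ?sqr_ge0 //; apply: le_trans HK; exact: sqr_ge0.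
apply: le_trans (_ : cexp E (fun x => f x ^+ 4) * cexp E a * cexp E a ^+ 2 <= _).
  by rewrite exprMn ler_wpM2r ?exprn_ge0.
by rewrite -mulrA -exprS.
Qed.

(* The degree-[<= t] part [g] of [D = bderiv j f] satisfies E[g D] = E[g^2] = the weight
   bounded here, and E[g^4] <= 9^t E[g^2]^2 by Bonami; Hölder against the [{0,±1}]-valued
   [D], whose support has measure [influence j f], concludes. *)
Lemma low_level_weight_le j f t delta eps : j \in U -> (forall x, f x = 1 \/ f x = -1) ->
  influence j f <= delta -> 0 <= eps -> 9 ^+ t * delta <= eps ^+ 2 ->
  \sum_(S | freqU S && S j && (deg S <= t.+1)%N) fourier f S ^+ 2 <= eps * influence j f.
Proof.
move=> jU fpm fdelta eps0 tdelta.
have Wmul := cexp_trunc_mul t (bderiv j f); have Wsqr := cexp_trunc_sqr t (bderiv j f).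
rewrite sum_fourier_bderiv_sqr // in Wmul Wsqr.
have W0 : 0 <= \sum_(S | freqU S && S j && (deg S <= t.+1)%N) fourier f S ^+ 2.
  by apply: sumr_ge0 => S _; apply: sqr_ge0.
apply: (quartic_arith W0 _ eps0 (b := 9 ^+ t : R)
  (A := cexp E (fun x => trunc t (bderiv j f) x ^+ 4))).
- by apply: cexp_ge0 => x _; apply: sqr_ge0.
- by rewrite -Wmul; apply: cexp_holder => [x|]; [apply: bderiv_pm | rewrite Wmul].
- by rewrite -Wsqr; apply: bonami (leqnn d) _; apply: low_degree_trunc.
- by apply: le_trans tdelta; rewrite ler_wpM2l ?exprn_ge0.
Qed.

Lemma sum_deg_freq (w : cube d -> R) (P : pred (cube d)) :
  \sum_(j in U) \sum_(S | freqU S && S j && P S) w S =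
  \sum_(S | freqU S && P S) (deg S)%:R * w S.
Proof.
transitivity (\sum_(j in U) \sum_(S | freqU S) (if S j && P S then w S else 0)).
  by apply: eq_bigr => j _; rewrite -big_mkcondr; apply: eq_bigl => S; rewrite andbA.
rewrite exchange_big /= big_mkcondr /=; apply: eq_bigr => S SU.
case: (P S); last by rewrite big1 // => j _; rewrite andbF.
rewrite /deg natr_sum mulr_suml big_mkcond /=; apply: eq_bigr => j _.
by case Sj: (S j); rewrite ?mul0r ?if_same // (freqU_mem SU Sj) mul1r.
Qed.

Lemma cvar_le_levels f t : cvar E f <=
  \sum_(j in U) \sum_(S | freqU S && S j && (deg S <= t.+1)%N) fourier f S ^+ 2 +
  t.+2%:R^-1 * \sum_(j in U) influence j f.
Proof.
have -> : \sum_(j in U) influence j f =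
    \sum_(S | freqU S && predT S) (deg S)%:R * fourier f S ^+ 2.
  rewrite -sum_deg_freq; apply: eq_bigr => j jU; rewrite influence_fourier //.
  by apply: eq_bigl => S; rewrite andbT.
rewrite cvar_fourier (sum_deg_freq _ (fun S => deg S <= t.+1)%N).
rewrite !big_mkcondr /= mulr_sumr -big_split /=; apply: ler_sum => S _.
by rewrite -deg_eq0 level_split_arith ?sqr_ge0.
Qed.

Lemma kkl f delta eps t : (forall x, f x = 1 \/ f x = -1) ->
  (forall j, j \in U -> influence j f <= delta) -> 0 <= eps -> 9 ^+ t * delta <= eps ^+ 2 ->
  cvar E f <= (eps + t.+2%:R^-1) * \sum_(j in U) influence j f.
Proof.
move=> fpm fdelta eps0 tdelta; apply: (le_trans (cvar_le_levels f t)).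
rewrite mulrDl lerD2r mulr_sumr; apply: ler_sum => j jU.
exact: low_level_weight_le jU fpm (fdelta j jU) eps0 tdelta.
Qed.

Lemma cvar_ge0 f : 0 <= cvar E f.
Proof. by rewrite cvar_fourier; apply: sumr_ge0 => S _; apply: sqr_ge0. Qed.

Lemma cvar_pm_le1 f : (forall x, f x = 1 \/ f x = -1) -> cvar E f <= 1.
Proof.
move=> fpm; rewrite /cvar (eq_cexp (g := fun=> 1)) => [|x _]; last by case: (fpm x) => ->; ring.
by rewrite cexp_cst // lerBlDr lerDl sqr_ge0.
Qed.

(* For a monotone function the derivative is [0]/[1]-valued, so its square is itself. *)
Lemma ccov_proj_influence j f : j \in U -> (forall x, f x = 1 \/ f x = -1) ->
  (forall x, 0 <= bderiv j f x) -> ccov E (proj j) f = influence j f.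
Proof.
move=> jU fpm fmono.
have mean0 : cexp E (proj j) = 0.
  by rewrite -(cexp_pm_odd (f := fun=> 1) jU) //; apply: eq_cexp => x _; rewrite mulr1.
rewrite /ccov mean0 mul0r subr0 /influence.
transitivity (cexp E (fun x => pm (x j) * f x * 1)).
  by apply: eq_cexp => x _; rewrite mulr1.
rewrite -cexp_bderiv_mul //; apply: eq_cexp => x _; rewrite mulr1.
by have := fmono x; case: (bderiv_pm j x fpm) => ->; rewrite ?expr0n ?expr1n ?ler0N1.
Qed.

Lemma subcube_weak_learning k f : (2 <= k)%N -> (k <= d)%N ->
  (forall x, f x = 1 \/ f x = -1) -> (forall j x, 0 <= bderiv j f x) ->
  (forall j x, (k <= j)%N -> bderiv j f x = 0) ->
  exists j, 1000^-1 * ln k%:R / k%:R * cvar E f <= `|ccov E (proj j) f|.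
Proof.
move=> k2 kd fpm fmono fjunta; set gamma := _ / _; set V := cvar E f.
case: (boolP [exists j, gamma * V <= `|ccov E (proj j) f|]) => [/existsP [j] ?|/existsPn small].
  by exists j.
have V0 : 0 <= V := cvar_ge0 f.
have L0 : 0 < ln k%:R by apply: ln_gt0; rewrite ltr1n.
have gamma0 : 0 <= gamma by rewrite divr_ge0 ?mulr_ge0 ?invr_ge0 ?ler0n ?(ltW L0).
have infl_small j : j \in U -> influence j f <= gamma * V.
  move=> jU; rewrite -ccov_proj_influence //; apply: le_trans (ler_norm _) _.
  by apply: ltW; rewrite ltNge small.
have infl_total : \sum_(j in U) influence j f <= k%:R * (gamma * V).
  apply: le_trans (_ : \sum_(j < d) (if (j < k)%N then gamma * V else 0) <= _).
    rewrite big_mkcond /=; apply: ler_sum => j _; case: ifP => jU; case: ltnP => jk //.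
    - exact: infl_small.
    - rewrite /influence (eq_cexp (g := fun=> 0)) ?cexp_cst // => x _.
      by rewrite fjunta // expr0n.
    - exact: mulr_ge0.
  by rewrite -big_mkcond (big_ord_narrow kd) sumr_const card_ord mulr_natl.
have k1 : (1 < k)%N by apply: leq_trans k2.
have /andP [k_ge k_lt] := trunc_log_bounds (isT : (1 < 81)%N) (ltnW k1).
have eps0 : 0 <= (4 * 1000^-1 * ln k%:R)^-1 by rewrite invr_ge0; apply: mulr_ge0 (ltW L0); lra.
have V_half : V <= V / 2.
  have tdelta := kkl_eps_choice k1 k_ge V0 (cvar_pm_le1 fpm).
  apply: le_trans (kkl fpm infl_small eps0 tdelta) _.
  apply: le_trans (kkl_depth_choice k1 k_lt V0).
  by rewrite ler_wpM2l //; apply: addr_ge0 eps0 _; rewrite invr_ge0 ler0n.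
have V_eq0 : V = 0 by lra.
have := small (Ordinal (leq_trans (ltnW k1) kd)).
by rewrite V_eq0 mulr0 normr_ge0.
Qed.

End Subcube.

Section InducedEvent.
Variables (d : nat) (s : seq ('I_d * bool)).
Local Notation E := (induced_event (@proj d) s).

Lemma induced_event_flip j x : j \notin unzip1 s -> x \in E -> flip j x \in E.
Proof.
move=> js; rewrite !inE => /allP xs; apply/allP => p ps; rewrite /proj flipE.
by case: (p.1 =P j) => [pj|_]; [rewrite -pj (map_f fst ps) in js | exact: xs].
Qed.

Lemma induced_event_fixed j x y : j \in unzip1 s -> x \in E -> y \in E -> x j = y j.
Proof.
case/mapP => p ps ->; rewrite !inE => /allP /(_ p ps) /eqP xp /allP /(_ p ps) /eqP yp.
by apply: pm_inj; rewrite -[pm (x _)]/(proj p.1 x) xp -yp.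
Qed.

End InducedEvent.

Lemma monotone_bderiv_ge0 d (f : cube d -> R) :
  (forall x y : cube d, (forall i, pm (x i) <= pm (y i)) -> f x <= f y) ->
  forall j x, 0 <= bderiv j f x.
Proof.
move=> fmono j x; rewrite /bderiv; case xj: (x j).
  have : f (flip j x) <= f x.
    by apply: fmono => i; rewrite flipE; case: eqP => [->|//]; rewrite xj /pm /=; lra.
  by rewrite /pm; lra.
have : f x <= f (flip j x).
  by apply: fmono => i; rewrite flipE; case: eqP => [->|//]; rewrite xj /pm /=; lra.
by rewrite /pm; lra.
Qed.

Lemma monotone_junta k d (hkd : (k <= d)%N) (g : cube k -> bool) : monotone_pm g ->
  forall x y : cube d, (forall i, pm (x i) <= pm (y i)) -> pm (junta hkd g x) <= pm (junta hkd g y).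
Proof. by move=> gmono x y xy; apply: gmono => i; rewrite !ffunE. Qed.

Lemma junta_bderiv k d (hkd : (k <= d)%N) (g : cube k -> bool) (j : 'I_d) x :
  (k <= j)%N -> bderiv j (fun x => pm (junta hkd g x)) x = 0.
Proof.
move=> kj; rewrite /bderiv /junta.
have -> : [ffun i => flip j x (widen_ord hkd i)] = [ffun i => x (widen_ord hkd i)].
  apply/ffunP => i; rewrite !ffunE; case: eqP => // ij.
  by have := ltn_ord i; rewrite -[nat_of_ord i]/(nat_of_ord (widen_ord hkd i)) ij ltnNge kj.
by rewrite subrr mulr0 mul0r.
Qed.

Theorem proposition4p4 :
  exists c : Rdefinitions.R, 0 < c /\
    forall (k d : nat) (hk : (2 <= k)%N) (hkd : (k <= d)%N) (g : cube k -> bool),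
      monotone_pm g ->
      weak_learning (@proj d) (fun x => pm (junta hkd g x))
        (c * Rpower.ln (k%:R) / k%:R).
Proof.
exists 1000^-1; split; first lra.
move=> k d k2 kd g g_mono s E_neq0; pose U := [set j : 'I_d | j \notin unzip1 s].
have flip_E j x : j \in U -> x \in induced_event (@proj d) s ->
    flip j x \in induced_event (@proj d) s.
  by rewrite inE; apply: induced_event_flip.
have fixed_E j x y : j \notin U -> x \in induced_event (@proj d) s ->
    y \in induced_event (@proj d) s -> x j = y j.
  by rewrite inE negbK; apply: induced_event_fixed.
apply: (subcube_weak_learning E_neq0 flip_E fixed_E k2 kd).
- by move=> x; rewrite /pm; case: junta; [left | right].
- exact/monotone_bderiv_ge0/monotone_junta.
- by move=> j x; apply: junta_bderiv.
Qed.
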